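(* The limit $\lim_{n\to\infty}\sqrt[n]{c_n}$ exists and equals $\limsup_{n\to\infty}\sqrt[n]{c_n}$.
   Context: A permutation (one-line notation) contains $321$ if there are $i<j<k$ with $\pi_i>\pi_j>\pi_k$. $\mathcal C_n$ is the set of cyclic permutations of $[n]$ (a single $n$-cycle), and $c_n=|\mathcal C_n(321)|$ is the number of cyclic permutations of $[n]$ avoiding $321$. *)

From HB Require Import structures.
From mathcomp Require Import all_boot all_order all_algebra all_fingroup.
From mathcomp Require Import all_classical all_reals all_analysis.
Set Implicit Arguments. Unset Strict Implicit. Unset Printing Implicit Defensive.

(* Permutations of [n] are 's : 'S_n' acting on {0,...,n-1}; one-line notation
   pi_i = s i (values compared as naturals). *)

Definition contains321 n (s : 'S_n) : bool :=
  [exists i : 'I_n, exists j : 'I_n, exists k : 'I_n,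
     [&& (i < j)%N, (j < k)%N, (s j < s i)%N & (s k < s j)%N]].

Definition cyclic_perm n (s : 'S_n) : bool := #|porbits s| == 1%N.

Definition c_n (n : nat) : nat :=
  #|[set s : 'S_n | cyclic_perm s & ~~ contains321 s]|.

From HB Require Import structures.
From mathcomp Require Import all_boot all_order all_algebra all_fingroup.
From mathcomp Require Import all_classical all_reals all_analysis.
From mathcomp Require Import zify ring lra.
Import Order.TTheory GRing.Theory Num.Theory.
Import numFieldNormedType.Exports.

Set Implicit Arguments. Unset Strict Implicit. Unset Printing Implicit Defensive.

(** Concatenating a cyclic 321-avoider of size a with one of size b and then
   swapping the two middle values gives a cyclic 321-avoider of size a + b, so
   c_(a+b) >= c_a c_b.  A 321-avoider is increasing both on its left-to-right
   maxima and on the remaining positions, hence determined by the set of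
   left-to-right maxima and their set of values: c_n <= 4^n.  By Fekete's
   argument, for a supermultiplicative sequence with c_n <= B^n the roots
   c_n^(1/n) converge to their supremum, and the limit of a convergent
   sequence is its limit superior. *)

Section PermOrbits.
Variable T : finType.
Implicit Types s : {perm T}.

Lemma perm_mem_porbit s x y : (s y \in porbit s x) = (y \in porbit s x).
Proof. by rewrite -!eq_porbit_mem -[s y]/((s ^+ 1)%g y) porbit_perm. Qed.

Lemma porbit_sub s (B : {pred T}) x :
  {in B, forall y, s y \in B} -> x \in B -> {subset porbit s x <= B}.
Proof.
move=> sB xB _ /porbitP [i ->]; elim: i => [|i IH]; first by rewrite perm1.
by rewrite expgSr permM; apply: sB.
Qed.

Lemma porbits_card1P s x : reflect (forall y, y \in porbit s x) (#|porbits s| == 1).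
Proof.
apply: (iffP idP) => [/cards1P [X defX] y | sx].
  have: porbit s y \in porbits s by apply: imset_f.
  have: porbit s x \in porbits s by apply: imset_f.
  by rewrite defX !inE => /eqP-> /eqP <-; apply: porbit_id.
apply/cards1P; exists (porbit s x); apply/setP => X; rewrite inE.
apply/imsetP/eqP => [[y _ ->]|->]; last by exists x.
by apply/eqP; rewrite eq_porbit_mem.
Qed.

End PermOrbits.

Section PermDsum.
Variables m n : nat.

Definition perm_dsum_fun (s : 'S_m) (t : 'S_n) (i : 'I_(m + n)) : 'I_(m + n) :=
  match fintype.split i with inl j => lshift n (s j) | inr k => rshift m (t k) end.

Lemma perm_dsum_fun_inj s t : injective (perm_dsum_fun s t).
Proof.
rewrite /perm_dsum_fun => i1 i2.
by case: split_ordP => j1 ->; case: split_ordP => j2 -> /eqP;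
  rewrite ?eq_shift // => /eqP/perm_inj ->.
Qed.

Definition perm_dsum s t : 'S_(m + n) := perm (@perm_dsum_fun_inj s t).

Lemma perm_dsumL s t j : perm_dsum s t (lshift n j) = lshift n (s j).
Proof. by rewrite permE /perm_dsum_fun (unsplitK (inl _ j)). Qed.

Lemma perm_dsumR s t k : perm_dsum s t (rshift m k) = rshift m (t k).
Proof. by rewrite permE /perm_dsum_fun (unsplitK (inr _ k)). Qed.

Lemma perm_dsum_inj s t s' t' : perm_dsum s t = perm_dsum s' t' -> s = s' /\ t = t'.
Proof.
move=> eq_st; split; apply/permP => i.
  by apply: (@lshift_inj _ n); rewrite -(perm_dsumL s t) eq_st perm_dsumL.
by apply: (@rshift_inj m); rewrite -(perm_dsumR s t) eq_st perm_dsumR.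
Qed.

End PermDsum.

Section CycleJoin.
Variables a b : nat.
Local Notation lft := (@lshift a.+1 b.+1).
Local Notation rgt := (@rshift a.+1 b.+1).
Implicit Types (s : 'S_a.+1) (t : 'S_b.+1).

(* The transposition exchanges points of the two distinct cycles of
   [perm_dsum s t], which fuses them into one; in one-line notation it swaps
   the values at positions a and a+1. *)
Definition cycle_join s t : 'S_(a.+1 + b.+1) :=
  tperm (lft ord_max) (rgt ord0) * perm_dsum s t.

Lemma cycle_joinL s t j : j != ord_max -> cycle_join s t (lft j) = lft (s j).
Proof.
by move=> j_max; rewrite permM tpermD ?perm_dsumL // ?eq_lshift ?eq_rlshift // eq_sym.
Qed.

Lemma cycle_joinR s t k : k != ord0 -> cycle_join s t (rgt k) = rgt (t k).
Proof.
by move=> k0; rewrite permM tpermD ?perm_dsumR // ?eq_rshift ?eq_lrshift // eq_sym.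
Qed.

Lemma cycle_join_max s t : cycle_join s t (lft ord_max) = rgt (t ord0).
Proof. by rewrite permM tpermL perm_dsumR. Qed.

Lemma cycle_join0 s t : cycle_join s t (rgt ord0) = lft (s ord_max).
Proof. by rewrite permM tpermR perm_dsumL. Qed.

Lemma cycle_join_inj s t s' t' : cycle_join s t = cycle_join s' t' -> s = s' /\ t = t'.
Proof. by move/mulgI/perm_dsum_inj. Qed.

Lemma cycle_join_cyclic s t :
  cyclic_perm s -> cyclic_perm t -> cyclic_perm (cycle_join s t).
Proof.
move=> /porbits_card1P cs /porbits_card1P ct.
apply/(porbits_card1P _ (rgt ord0)); set X := porbit _ _.
have X_step x : x \in X -> cycle_join s t x \in X by rewrite perm_mem_porbit.
have X_lft j : lft j \in X.
  have sB : {in [pred j | lft j \in X], forall j, s j \in [pred j | lft j \in X]}.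
    move=> i; rewrite !inE => Xi.
    case: (eqVneq i ord_max) => [->|i_max]; last by rewrite -(cycle_joinL s t) ?X_step.
    by rewrite -(cycle_join0 s t) X_step ?porbit_id.
  apply: (porbit_sub sB _ (cs (s ord_max) j)).
  by rewrite inE -(cycle_join0 s t) X_step ?porbit_id.
have X_rgt k : rgt k \in X.
  have sB : {in [pred k | rgt k \in X], forall k, t k \in [pred k | rgt k \in X]}.
    move=> i; rewrite !inE => Xi.
    case: (eqVneq i ord0) => [->|i0]; last by rewrite -(cycle_joinR s t) ?X_step.
    by rewrite -(cycle_join_max s t) X_step.
  by apply: (porbit_sub sB _ (ct ord0 k)); rewrite inE porbit_id.
by move=> x; case: (split_ordP x) => [j ->|k ->].
Qed.

Lemma cycle_join_val s t x :
  (cycle_join s t x : nat) =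
    if (x < a)%N || (x == a.+1 :> nat) then (s (inord (minn x a)) : nat)
    else (a.+1 + t (inord (x - a.+1)))%N.
Proof.
have inordE n (i : 'I_n.+1) v : (i : nat) = v -> inord v = i.
  by move=> <-; rewrite inord_val.
case: (split_ordP x) => [j ->|k ->] /=.
- case: (eqVneq j ord_max) => [->|j_max].
    have -> : (a < a) || (a == a.+1) = false by lia.
    by rewrite cycle_join_max (inordE _ ord0) //=; lia.
  have ja : (j < a)%N by move: j_max (ltn_ord j); rewrite -val_eqE /=; lia.
  by rewrite cycle_joinL //= ja (inordE _ j) //; lia.
- case: (eqVneq k ord0) => [->|k0].
    have -> : (a.+1 + 0 < a) || (a.+1 + 0 == a.+1) by lia.
    by rewrite cycle_join0 (inordE _ ord_max) //=; lia.
  have -> : (a.+1 + k < a) || (a.+1 + k == a.+1) = false.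
    by move: k0; rewrite -val_eqE /=; lia.
  by rewrite cycle_joinR //= (inordE _ k) //; lia.
Qed.

Lemma cycle_join_avoid321 s t :
  ~~ contains321 s -> ~~ contains321 t -> ~~ contains321 (cycle_join s t).
Proof.
(* The positions carrying values of s (x < a or x = a+1) and those carrying
   values of t are interleaved only at a, a+1, so a 321 pattern lies in one
   block. *)
move=> s321 t321; apply/negP.
case/existsP=> i /existsP [j /existsP [k /and4P [ij jk]]].
rewrite !cycle_join_val.
have := ltn_ord (s (inord (minn i a))); have := ltn_ord (s (inord (minn j a))).
have := ltn_ord (s (inord (minn k a))); have := ltn_ord i; have := ltn_ord j.
have := ltn_ord k.
case: ifP => hi; case: ifP => hj; case: ifP => hk => *; try lia.
- apply: (negP s321); apply/existsP; exists (inord (minn i a)).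
  apply/existsP; exists (inord (minn j a)); apply/existsP; exists (inord (minn k a)).
  by rewrite !inordK; lia.
- apply: (negP t321); apply/existsP; exists (inord (i - a.+1)).
  apply/existsP; exists (inord (j - a.+1)); apply/existsP; exists (inord (k - a.+1)).
  by rewrite !inordK; lia.
Qed.

End CycleJoin.

Lemma sorted_enum_ord_set n (A : {set 'I_n}) : sorted (relpre val ltn) (enum A).
Proof.
apply: sorted_filter => [y x z|]; first exact: ltn_trans.
by rewrite -enumT -(sorted_map (f := val)) val_enum_ord iota_ltn_sorted.
Qed.

Lemma eq_in_homo_ltn_imset n m (A : {set 'I_n}) (f g : 'I_n -> 'I_m) :
  {in A &, {homo f : x y / (x < y)%N}} -> {in A &, {homo g : x y / (x < y)%N}} ->
  f @: A = g @: A -> {in A, f =1 g}.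
Proof.
move=> f_homo g_homo fgA.
have sorted_image (h : 'I_n -> 'I_m) : {in A &, {homo h : x y / (x < y)%N}} ->
    sorted (relpre val ltn) (map h (enum A)).
  move=> h_homo; apply: (homo_sorted_in (P := mem A)) h_homo _ _.
    by apply/allP => x; rewrite mem_enum.
  exact: sorted_enum_ord_set.
have mem_image (h : 'I_n -> 'I_m) : map h (enum A) =i h @: A.
  by move=> y; apply/mapP/imsetP => -[x]; rewrite ?mem_enum; exists x; rewrite ?mem_enum.
have: map f (enum A) = map g (enum A).
  apply: (irr_sorted_eq (leT := relpre val ltn)) (sorted_image _ f_homo)
    (sorted_image _ g_homo) _.
  - by move=> ???; apply: ltn_trans.
  - by move=> ?; apply: ltnn.
  - by move=> y; rewrite !mem_image fgA.
by move/eq_in_map => fg x; rewrite -mem_enum => /fg.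
Qed.

Section Avoid321Bound.
Variable n : nat.
Implicit Types s r : 'S_n.

Definition lr_maxima s := [set i : 'I_n | [forall j : 'I_n, (j < i)%N ==> (s j < s i)%N]].

Lemma lr_maxima_homo s : {in lr_maxima s &, {homo s : x y / (x < y)%N}}.
Proof. by move=> x y _; rewrite inE => /forallP /(_ x) /implyP. Qed.

Lemma avoid321_homo_notin_lr_maxima s :
  ~~ contains321 s -> {in ~: lr_maxima s &, {homo s : x y / (x < y)%N}}.
Proof.
move=> s321 x y; rewrite !inE negb_forall => /existsP [j]; rewrite negb_imply.
case/andP=> jx sjx _ xy; case: (ltngtP (s x) (s y)) => // [sxy|/val_inj/perm_inj yx].
  case/negP: s321; apply/existsP; exists j; apply/existsP; exists x.
  apply/existsP; exists y; apply/and4P; split => //.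
  have sxj : (s x : nat) <> s j by move/val_inj/perm_inj => xj; rewrite xj ltnn in jx.
  lia.
by rewrite yx ltnn in xy.
Qed.

Lemma avoid321_eq s r : ~~ contains321 s -> ~~ contains321 r ->
  lr_maxima s = lr_maxima r -> s @: lr_maxima s = r @: lr_maxima r -> s = r.
Proof.
move=> s321 r321 eq_max eq_val; apply/permP => x.
case: (boolP (x \in lr_maxima s)) => [xP|xnP].
  apply: (eq_in_homo_ltn_imset (@lr_maxima_homo s) _ _ xP); last by rewrite eq_val eq_max.
  by rewrite eq_max; apply: lr_maxima_homo.
have eq_valC : s @: (~: lr_maxima s) = r @: (~: lr_maxima s).
  by rewrite -!preim_permV !preimsetC !preim_permV eq_val eq_max.
apply: (eq_in_homo_ltn_imset (avoid321_homo_notin_lr_maxima s321) _ eq_valC);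
  last by rewrite inE.
by rewrite eq_max; apply: avoid321_homo_notin_lr_maxima.
Qed.

Lemma card_avoid321 : #|[set s : 'S_n | ~~ contains321 s]| <= 4 ^ n.
Proof.
have inj : {in [set s : 'S_n | ~~ contains321 s] &,
    injective (fun s => (lr_maxima s, s @: lr_maxima s))}.
  by move=> s r; rewrite !inE => s321 r321 [eq_max eq_val]; apply: avoid321_eq.
apply: (leq_trans (leq_card_in _ _ inj)).
by rewrite card_prod -cardsT -powersetT card_powerset cardsT card_ord -expnMn.
Qed.

End Avoid321Bound.

Lemma c_n_le_expn n : c_n n <= 4 ^ n.
Proof.
apply: leq_trans (card_avoid321 n); apply: subset_leq_card.
by apply/fintype.subsetP => s; rewrite !inE => /andP [].
Qed.

Lemma c_n_supermul m n : 0 < m -> 0 < n -> c_n m * c_n n <= c_n (m + n).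
Proof.
case: m => // a _; case: n => // b _; rewrite /c_n -cardsX.
have join_inj : injective (fun st : 'S_a.+1 * 'S_b.+1 => cycle_join st.1 st.2).
  by move=> [s t] [s' t'] /= /cycle_join_inj [-> ->].
rewrite -(card_imset _ join_inj); apply: subset_leq_card.
apply/fintype.subsetP => x /imsetP [[s t] /setXP []].
rewrite !inE => /andP [cs s321] /andP [ct t321] ->.
by rewrite cycle_join_cyclic ?cycle_join_avoid321.
Qed.

Lemma c_n_gt0 n : 0 < n -> 0 < c_n n.
Proof.
have c1 : 0 < c_n 1.
  apply/card_gt0P; exists 1%g; rewrite inE; apply/andP; split.
    by apply/(porbits_card1P _ ord0) => y; rewrite (ord1 y) porbit_id.
  by apply/existsP => -[i /existsP [j /existsP [k]]]; rewrite (ord1 i) (ord1 j).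
case: n => // n _; elim: n => // n IH.
have := c_n_supermul (ltn0Sn n) (ltn0Sn 0); rewrite addn1; apply: leq_trans.
by rewrite muln_gt0 IH.
Qed.

Local Open Scope classical_set_scope.
Local Open Scope ring_scope.

Section SupermultiplicativeRoot.
Variable c : nat -> nat.
Hypothesis c_gt0 : forall n, (0 < n)%N -> (0 < c n)%N.
Hypothesis c_supermul : forall m n, (0 < m)%N -> (0 < n)%N -> (c m * c n <= c (m + n))%N.
Variable B : nat.
Hypothesis c_le_expn : forall n, (c n <= B ^ n)%N.

Lemma supermul_expn_div m n : (0 < m)%N -> (0 < n)%N -> (c m ^ (n %/ m) <= c n)%N.
Proof.
move=> m_gt0; elim/ltn_ind: n => n IH n_gt0.
have [n_lt_m|m_le_n] := ltnP n m; first by rewrite divn_small // c_gt0.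
have [->|n_ne_m] := eqVneq n m; first by rewrite divnn m_gt0.
have [k def_n] : exists k, n = (k.+1 + m)%N by exists (n - m).-1; lia.
rewrite def_n divnDr ?dvdnn // divnn m_gt0 addn1 expnS mulnC.
apply: (leq_trans _ (c_supermul _ _)) => //.
by rewrite leq_mul2r IH ?orbT //; lia.
Qed.

Variable R : realType.

Definition root_seq n : R := (c n)%:R `^ (n%:R)^-1.

Lemma ln_c_ge0 n : (0 < n)%N -> 0 <= ln (c n)%:R :> R.
Proof. by move=> n_gt0; rewrite ln_ge0 // ler1n c_gt0. Qed.

Lemma root_seqE n : (0 < n)%N -> root_seq n = expR (ln (c n)%:R / n%:R).
Proof.
by move=> n_gt0; rewrite /root_seq /powR pnatr_eq0 eqn0Ngt c_gt0 // mulrC.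
Qed.

Lemma root_seq_le n : root_seq n <= B%:R.
Proof.
have B_gt0 : (0 < B)%N by have := c_le_expn 1; rewrite expn1; apply: leq_trans (c_gt0 _).
case: n => [|n]; first by rewrite /root_seq invr0 powRr0 ler1n.
rewrite root_seqE // -[leRHS]lnK ?posrE ?ltr0n // ler_expR ler_pdivrMr ?ltr0n //.
rewrite mulrC mulr_natl -lnXn ?ltr0n // ler_ln ?posrE ?exprn_gt0 ?ltr0n ?c_gt0 //.
by rewrite -natrX ler_nat.
Qed.

Lemma root_seq0 : root_seq 0 <= root_seq 1.
Proof. by rewrite /root_seq invr0 powRr0 invr1 powRr1 ?ler0n // ler1n c_gt0. Qed.

Lemma ln_supermul_div m n : (0 < m)%N -> (0 < n)%N ->
  (n %/ m)%:R * ln (c m)%:R <= ln (c n)%:R :> R.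
Proof.
move=> m_gt0 n_gt0; rewrite mulr_natl -lnXn ?ltr0n ?c_gt0 //.
rewrite ler_ln ?posrE ?exprn_gt0 ?ltr0n ?c_gt0 //.
by rewrite -natrX ler_nat supermul_expn_div.
Qed.

Lemma root_seq_lower m n : (0 < m)%N -> (0 < n)%N ->
  root_seq m * (1 - ln (c m)%:R / n%:R) <= root_seq n.
Proof.
move=> m_gt0 n_gt0; set L := ln (c m)%:R.
have L_ge0 : 0 <= L by apply: ln_c_ge0.
have m_R : 0 < m%:R :> R by rewrite ltr0n.
have n_R : 0 < n%:R :> R by rewrite ltr0n.
have div_lb : (n%:R - m%:R) / m%:R <= (n %/ m)%:R :> R.
  rewrite ler_pdivrMr // lerBlDr -natrM -natrD ler_nat.
  by have := divn_eq n m; have := ltn_pmod n m_gt0; lia.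
have ln_lb : L / m%:R - L / n%:R <= ln (c n)%:R / n%:R.
  have -> : L / m%:R - L / n%:R = (n%:R - m%:R) / m%:R * L / n%:R.
    by field; rewrite !gt_eqF.
  rewrite ler_pM2r ?invr_gt0 //; apply: le_trans (ln_supermul_div m_gt0 n_gt0).
  exact: ler_wpM2r.
rewrite !root_seqE //; apply: le_trans (_ : expR (L / m%:R - L / n%:R) <= _);
  last by rewrite ler_expR.
rewrite expRD ler_wpM2l ?expR_ge0 //.
by have := expR_ge1Dx (- (L / n%:R)); lra.
Qed.

Lemma root_seq_cvg : root_seq @ \oo --> sup (range root_seq).
Proof.
set S := sup _.
have supS : has_sup (range root_seq).
  split; first by exists (root_seq 0), 0%N.
  by exists B%:R => _ [n _ <-]; apply: root_seq_le.
apply/cvgrPdist_le => e e_gt0.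
have [m [m_gt0 m_close]] : exists m, (0 < m)%N /\ S - e < root_seq m.
  have [_ [[|m] _ <-] m_close] := sup_adherent e_gt0 supS.
    by exists 1%N; split => //; apply: lt_le_trans m_close root_seq0.
  by exists m.+1.
set d := root_seq m - (S - e).
set K := root_seq m * ln (c m)%:R.
have d_gt0 : 0 < d by rewrite subr_gt0.
exists (Num.truncn (K / d)).+1 => // n /= n_large.
have n_gt0 : (0 < n)%N by apply: leq_trans n_large.
have K_small : K / n%:R <= d.
  have: K / d < n%:R by apply: lt_le_trans (truncnS_gt _) _; rewrite ler_nat.
  by rewrite ler_pdivrMr ?ltr0n // ltr_pdivrMr // mulrC => /ltW.
have root_n_ub : root_seq n <= S.
  by apply: sup_upper_bound supS _ (ex_intro2 _ _ n I erefl).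
have root_n_lb : root_seq m - K / n%:R <= root_seq n.
  by apply: le_trans (root_seq_lower m_gt0 n_gt0); rewrite /K mulrBr mulr1 mulrA.
rewrite ler_norml; apply/andP; split; rewrite /d in K_small; lra.
Qed.

End SupermultiplicativeRoot.

Theorem mainTheorem9 (R : realType) :
  let u : nat -> R := fun n => (c_n n)%:R `^ (n%:R)^-1 in
  cvgn u /\ ((limn u)%:E = limn_esup (fun n => (u n)%:E))%E.
Proof.
move=> u.
have u_cvgn : cvgn u.
  apply/cvg_ex; exists (sup (range u)).
  exact: (root_seq_cvg (R := R) c_n_gt0 c_n_supermul c_n_le_expn).
split => //; rewrite is_cvg_limn_esupE ?EFin_lim //.
exact: (cvg_comp _ _ u_cvgn).
Qed.
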